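(* Let $T$ be a spherically homogeneous rooted tree in which every vertex has at least $2$ children, let $G\le\mathrm{Aut}~T$ be a weakly branch group, and let $N$ be a non-trivial normal subgroup of $G$. Then $N$ is a virtual retract of $G$ if and only if $N$ has finite index in $G$.
   Context: $\mathrm{Aut}~T$ is the group of automorphisms of $T$ fixing the root; $\mathcal{L}_n$ is the $n$th level; $T_v$ is the subtree of descendants of $v$. For $G\le\mathrm{Aut}~T$, $\mathrm{rist}_G(v)$ is the subgroup of elements of $G$ fixing every vertex outside $T_v$, and $\mathrm{Rist}_G(n)=\prod_{v\in\mathcal{L}_n}\mathrm{rist}_G(v)$. $G$ is weakly branch if it acts transitively on every level of $T$ and $\mathrm{Rist}_G(n)$ is infinite for every $n\ge1$. $H\le G$ is a virtual retract of $G$ if there is a finite-index subgroup $K\le G$ containing $H$ and a homomorphism $K\to H$ restricting to the identity on $H$. *)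

(* Rooted spherically homogeneous tree with
   branching sequence m : nat -> nat; vertices of level n are words
   x_0 ... x_(n-1) with x_i < m i. *)
From Stdlib Require List.
From mathcomp Require Import all_boot.
Set Implicit Arguments. Unset Strict Implicit. Unset Printing Implicit Defensive.

Definition validb (m : nat -> nat) (s : seq nat) : bool :=
  all (fun i => nth 0 s i < m i) (iota 0 (size s)).

Definition V (m : nat -> nat) := {s : seq nat | validb m s}.

Definition lvl (m : nat -> nat) (v : V m) : nat := size (proj1_sig v).

(* u is an ancestor-or-equal of w (w lies in the subtree T_u) *)
Definition below (m : nat -> nat) (u w : V m) : bool :=
  prefix (proj1_sig u) (proj1_sig w).

(* automorphisms of the rooted tree: bijections preserving levels and the
   ancestor relation (hence parent/child edges; the root is fixed) *)
Definition is_aut (m : nat -> nat) (f : V m -> V m) : Prop :=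
  bijective f /\ (forall u, lvl (f u) = lvl u) /\
  (forall u w, below (f u) (f w) = below u w).

Definition is_subgroup (m : nat -> nat) (G : (V m -> V m) -> Prop) : Prop :=
  (forall g, G g -> is_aut g) /\ G id /\
  (forall g h, G g -> G h -> G (g \o h)) /\
  (forall g, G g -> exists2 h, G h & (h \o g = id /\ g \o h = id)).

Definition subset_of (m : nat -> nat) (H G : (V m -> V m) -> Prop) : Prop :=
  forall g, H g -> G g.

Definition finite_set (m : nat -> nat) (S : (V m -> V m) -> Prop) : Prop :=
  exists l : seq (V m -> V m), forall g, S g -> List.In g l.

Definition finite_index (m : nat -> nat) (K G : (V m -> V m) -> Prop) : Prop :=
  exists reps : seq (V m -> V m), forall g, G g ->
    exists2 r, List.In r reps & exists2 k, K k & g = r \o k.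

Definition is_normal (m : nat -> nat) (N G : (V m -> V m) -> Prop) : Prop :=
  is_subgroup N /\ subset_of N G /\
  forall g n ginv, G g -> N n -> ginv \o g = id -> g \o ginv = id ->
    N (g \o n \o ginv).

Definition rist (m : nat -> nat) (G : (V m -> V m) -> Prop) (v : V m)
  (g : V m -> V m) : Prop :=
  G g /\ forall w, ~~ below v w -> g w = w.

Definition Rist (m : nat -> nat) (G : (V m -> V m) -> Prop) (n : nat)
  (g : V m -> V m) : Prop :=
  exists l : seq (V m * (V m -> V m)),
    (forall p, List.In p l -> lvl p.1 = n /\ rist G p.1 p.2) /\
    g = foldr (fun p acc => p.2 \o acc) id l.

Definition weakly_branch (m : nat -> nat) (G : (V m -> V m) -> Prop) : Prop :=
  is_subgroup G /\
  (forall u v : V m, lvl u = lvl v -> exists2 g, G g & g u = v) /\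
  (forall n, 1 <= n -> ~ finite_set (Rist G n)).

Definition virtual_retract (m : nat -> nat) (H G : (V m -> V m) -> Prop) : Prop :=
  exists K : (V m -> V m) -> Prop,
    is_subgroup K /\ subset_of K G /\ finite_index K G /\ subset_of H K /\
    exists phi : (V m -> V m) -> (V m -> V m),
      (forall k, K k -> H (phi k)) /\
      (forall k1 k2, K k1 -> K k2 -> phi (k1 \o k2) = phi k1 \o phi k2) /\
      (forall h, H h -> phi h = h).

From mathcomp Require Import all_boot.
From Stdlib Require Import FunctionalExtensionality Classical.
Set Implicit Arguments. Unset Strict Implicit. Unset Printing Implicit Defensive.

(* If phi : K -> N is a retraction, then for k in K the element c := (phi k)^-1 k lies in
   ker phi, and for n in N the commutator [c, n] lies in N by normality and is killed by phi,
   so c centralizes N.  In a weakly branch group no nontrivial c centralizes a nontrivial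
   normal subgroup N: if c and some n in N both move a vertex z, take g in rist_G(z) moving a
   vertex y; the commutator [g, n] lies in N, is supported in T_z and T_(n z) and moves y, so
   c, which commutes with it, maps y into that support, forcing c z = n z.  Thus n agrees with
   c below any vertex u both move, which fails for the conjugate of n by a nontrivial element
   of rist_G(u).  Level-transitivity provides a common moved vertex.  Hence c = 1, K = N, and
   N has finite index; conversely take K = N and phi = id. *)

Lemma nonid_moves (A : Type) (f : A -> A) : f <> id -> exists x, f x <> x.
Proof.
move=> nf; apply: NNPP => fixed; apply: nf; apply: functional_extensionality => x.
by apply: NNPP => fx; apply: fixed; exists x.
Qed.

Lemma foldr_comp_nonid (A B : Type) (l : seq (B * (A -> A))) :
  foldr (fun p acc => p.2 \o acc) id l <> id -> exists2 p, List.In p l & p.2 <> id.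
Proof.
elim: l => [//|p l IH] /= nf.
have [p1 | np] := classic (p.2 = id); last by exists p; first left.
by case: IH => [|q ql nq]; [rewrite p1 in nf | exists q; first right].
Qed.

Section Tree.
Variable m : nat -> nat.
Implicit Types (u v w : V m) (f : V m -> V m).

Lemma below_refl v : below v v.
Proof. exact: prefix_refl. Qed.

Lemma below_same_lvl u1 u2 w :
  below u1 w -> below u2 w -> lvl u1 = lvl u2 -> u1 = u2.
Proof.
rewrite /below /lvl !prefixE => /eqP e1 /eqP e2 el; apply: val_inj.
by rewrite /= -e1 -e2 el.
Qed.

Lemma below_disjoint u1 u2 w :
  u1 <> u2 -> lvl u1 = lvl u2 -> below u1 w -> ~~ below u2 w.
Proof. by move=> ne el b1; apply/negP => b2; apply: ne; apply: below_same_lvl b1 b2 el. Qed.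

Lemma exists_below_at_lvl (m_gt0 : forall i, 0 < m i) v n :
  lvl v <= n -> exists2 w, lvl w = n & below v w.
Proof.
case: v => s hs; rewrite /lvl /= => le_sn.
have hw : validb m (s ++ nseq (n - size s) 0).
  apply/allP => i _; rewrite nth_cat.
  case: ifP => [lt_is | _]; first by move/allP: hs; apply; rewrite mem_iota.
  by rewrite nth_nseq; case: ifP.
exists (exist (fun t => validb m t) _ hw : V m); rewrite /lvl /=.
  by rewrite size_cat size_nseq subnKC.
by rewrite /below /= prefix_prefix.
Qed.

Lemma aut_inj f : is_aut f -> injective f.
Proof. by case=> /bij_inj. Qed.

Lemma aut_lvl f u : is_aut f -> lvl (f u) = lvl u.
Proof. by case=> _ []. Qed.

Lemma aut_below f u w : is_aut f -> below (f u) (f w) = below u w.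
Proof. by case=> _ []. Qed.

Lemma aut_moved_below f u w : is_aut f -> f u <> u -> below u w -> f w <> w.
Proof.
move=> af fu b fw; apply: fu; apply: (@below_same_lvl _ _ w) => //.
- by rewrite -fw aut_below.
- exact: aut_lvl.
Qed.

Lemma aut_moved_lvl_gt0 f u : is_aut f -> f u <> u -> 0 < lvl u.
Proof.
move=> af fu; rewrite lt0n; apply/negP => /eqP u0; apply: fu; apply: val_inj.
have fu0 : lvl (f u) = 0 by rewrite aut_lvl.
by move: u0 fu0; rewrite /lvl => /size0nil /= -> /size0nil ->.
Qed.

Section Supported.
Variables (f : V m -> V m) (v : V m).
Hypotheses (af : is_aut f) (fix_out : forall w, ~~ below v w -> f w = w).

Lemma supported_moved_below w : f w <> w -> below v w /\ below v (f w).
Proof.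
move=> fw; split; apply/negPn/negP => nb; apply: fw; first exact: fix_out.
by apply: (aut_inj af); apply: fix_out.
Qed.

Lemma supported_fixes_root : f v = v.
Proof.
apply: NNPP => fv; have [_ b] := supported_moved_below fv.
by apply: fv; apply: (@below_same_lvl _ _ (f v)); rewrite ?aut_lvl ?below_refl.
Qed.

End Supported.
End Tree.

Section Subgroup.
Variables (m : nat -> nat) (G : (V m -> V m) -> Prop).
Hypothesis SG : is_subgroup G.
Implicit Types (v : V m) (g h hi : V m -> V m).

Lemma subgroup_aut g : G g -> is_aut g.
Proof. by case: SG => A _ /A. Qed.

Lemma subgroup_id : G id.
Proof. by case: SG => _ []. Qed.

Lemma subgroup_comp g h : G g -> G h -> G (g \o h).
Proof. by case: SG => _ [_ [comp _]]; apply: comp. Qed.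

Lemma subgroup_inv g : G g -> exists2 h, G h & cancel g h /\ cancel h g.
Proof.
case: SG => _ [_ [_ inv]] /inv [h Gh [hg gh]].
by exists h => //; split=> x; [apply: (congr1 (@^~ x) hg) | apply: (congr1 (@^~ x) gh)].
Qed.

Lemma rist_conj v g h hi :
  G h -> G hi -> cancel h hi -> cancel hi h -> rist G v g -> rist G (h v) (h \o g \o hi).
Proof.
move=> Gh Ghi hK hiK [Gg fix_out]; split.
  by apply: subgroup_comp => //; apply: subgroup_comp.
move=> w nb /=; rewrite fix_out ?hiK //.
by rewrite -(aut_below _ _ (subgroup_aut Gh)) hiK.
Qed.

End Subgroup.

Lemma normal_conj (m : nat -> nat) (G N : (V m -> V m) -> Prop) g gi n :
  is_normal N G -> G g -> N n -> cancel g gi -> cancel gi g -> N (g \o n \o gi).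
Proof.
case=> _ [_ conj] Gg Nn gK giK.
by apply: conj => //; apply: functional_extensionality => x; [apply: gK | apply: giK].
Qed.

Lemma normal_subgroup (m : nat -> nat) (G N : (V m -> V m) -> Prop) :
  is_normal N G -> is_subgroup N.
Proof. by case. Qed.

Lemma normal_sub (m : nat -> nat) (G N : (V m -> V m) -> Prop) :
  is_normal N G -> subset_of N G.
Proof. by case=> _ []. Qed.

Lemma nonfinite_nonid (m : nat -> nat) (S : (V m -> V m) -> Prop) :
  ~ finite_set S -> exists2 g, S g & g <> id.
Proof.
move=> infS; apply: NNPP => all_id; apply: infS; exists [:: id] => g Sg /=; left.
by apply: NNPP => ng; apply: all_id; exists g => // /esym.
Qed.

Section WeaklyBranch.
Variables (m : nat -> nat) (G : (V m -> V m) -> Prop).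
Hypothesis WB : weakly_branch G.

Lemma weakly_branch_subgroup : is_subgroup G.
Proof. by case: WB. Qed.

Lemma weakly_branch_transitive (u v : V m) : lvl u = lvl v -> exists2 g, G g & g u = v.
Proof. by case: WB => _ [tr _]; apply: tr. Qed.

Lemma exists_nonid_rist n : 0 < n -> exists v g, [/\ lvl v = n, rist G v g & g <> id].
Proof.
case: WB => _ [_ inf] n_gt0.
have [g [l [l_rist ->]] /foldr_comp_nonid [p pl np]] := nonfinite_nonid (inf n n_gt0).
by have [lp rp] := l_rist p pl; exists p.1, p.2.
Qed.

Lemma exists_moving_rist (w : V m) : 0 < lvl w -> exists g y, rist G w g /\ g y <> y.
Proof.
move=> w_gt0; have SG := weakly_branch_subgroup.
have [v [g [lv rg /nonid_moves [y gy]]]] := exists_nonid_rist w_gt0.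
have [h Gh hv] := weakly_branch_transitive lv.
have [hi Ghi [hK hiK]] := subgroup_inv SG Gh.
exists (h \o g \o hi), (h y); split; first by rewrite -hv; apply: rist_conj.
by rewrite /= hK => /(aut_inj (subgroup_aut SG Gh)).
Qed.

End WeaklyBranch.

Section Centralizer.
Variables (m : nat -> nat) (G N : (V m -> V m) -> Prop).
Hypotheses (WB : weakly_branch G) (NN : is_normal N G).
Implicit Types (u w y z : V m).

Let SG := weakly_branch_subgroup WB.
Let SN := normal_subgroup NN.
Let NG := normal_sub NN.

Lemma normal_moves_below (m_gt0 : forall i, 0 < m i) n0 u0 :
  N n0 -> n0 <> id -> exists u n, [/\ below u0 u, N n & n u <> u].
Proof.
move=> Nn0 /nonid_moves [v0 nv0].
have [u lu u0u] := exists_below_at_lvl m_gt0 (leq_maxl (lvl u0) (lvl v0)).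
have [v lv v0v] := exists_below_at_lvl m_gt0 (leq_maxr (lvl u0) (lvl v0)).
have [h Gh hv] := weakly_branch_transitive WB (etrans lv (esym lu)).
have [hi _ [hK hiK]] := subgroup_inv SG Gh.
exists u, (h \o n0 \o hi); split=> //; first exact: (normal_conj NN Gh Nn0 hK hiK).
rewrite /= -hv hK => /(aut_inj (subgroup_aut SG Gh)).
exact: aut_moved_below (subgroup_aut SG (NG Nn0)) nv0 v0v.
Qed.

Variable c : V m -> V m.
Hypotheses (Gc : G c) (cN : forall n, N n -> c \o n = n \o c).

Let ac := subgroup_aut SG Gc.

Lemma normal_move_eq_centralizer z n : c z <> z -> N n -> n z <> z -> n z = c z.
Proof.
move=> cz Nn nz; have an := subgroup_aut SG (NG Nn).
have [g [y [[Gg g_out] gy]]] := exists_moving_rist WB (aut_moved_lvl_gt0 ac cz).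
have ag := subgroup_aut SG Gg.
have [gi _ [gK giK]] := subgroup_inv SG Gg.
have [ni Nni [_ niK]] := subgroup_inv SN Nn.
have gi_out w : ~~ below z w -> gi w = w by move=> /g_out {1}<-.
have ni_out w : ~~ below (n z) w -> ~~ below z (ni w).
  by rewrite -(aut_below z _ an) niK.
pose x := g \o n \o gi \o ni.
have Nx : N x := subgroup_comp SN (normal_conj NN Gg Nn gK giK) Nni.
have x_supp w : x w <> w -> below z w \/ below (n z) w.
  move=> xw; apply: NNPP => /not_or_and [/negP zw /negP nzw]; apply: xw.
  by rewrite /x /= gi_out ?niK ?g_out // ni_out.
have [zy _] := supported_moved_below ag g_out gy.
have x_y : x y <> y.
  by rewrite /x /= gi_out ?niK // ni_out // (below_disjoint (nesym nz) (esym (aut_lvl _ an))).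
have x_cy : x (c y) <> c y.
  have cx w : c (x w) = x (c w) by exact: (congr1 (@^~ w) (cN Nx)).
  by rewrite -cx => /(aut_inj ac).
have czy : below (c z) (c y) by rewrite aut_below.
case: (x_supp _ x_cy) => b; first by case: cz; apply: below_same_lvl czy b _; rewrite aut_lvl.
by apply: below_same_lvl b czy _; rewrite !aut_lvl.
Qed.

Lemma normal_eq_centralizer_below u n w :
  c u <> u -> N n -> n u <> u -> below u w -> n w = c w.
Proof.
move=> cu Nn nu uw; have an := subgroup_aut SG (NG Nn).
have nuc := normal_move_eq_centralizer cu Nn nu.
apply: normal_move_eq_centralizer Nn _; first exact: aut_moved_below ac cu uw.
move=> nw; have: below (c u) (n w) by rewrite -nuc aut_below.
by rewrite nw; apply/negP/(below_disjoint (nesym cu) (esym (aut_lvl _ ac))).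
Qed.

Lemma no_common_moved_vertex u n : c u <> u -> N n -> n u <> u -> False.
Proof.
move=> cu Nn nu.
have [g [y [[Gg g_out] gy]]] := exists_moving_rist WB (aut_moved_lvl_gt0 ac cu).
have ag := subgroup_aut SG Gg.
have [gi _ [gK giK]] := subgroup_inv SG Gg.
have [uy ugy] := supported_moved_below ag g_out gy.
have giu : gi u = u by rewrite -{1}(supported_fixes_root ag g_out) gK.
have g_cu w : below (c u) w -> g w = w.
  by move=> /(below_disjoint cu (aut_lvl _ ac)) /g_out.
pose n' := g \o n \o gi.
have Nn' : N n' := normal_conj NN Gg Nn gK giK.
have n'u : n' u <> u.
  by rewrite /n' /= giu (normal_move_eq_centralizer cu Nn nu) g_cu ?below_refl.
have n'gy : n' (g y) = c y.
  by rewrite /n' /= gK (normal_eq_centralizer_below cu Nn nu uy) g_cu ?aut_below.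
have := normal_eq_centralizer_below cu Nn' n'u ugy.
by rewrite n'gy => /(aut_inj ac) /esym.
Qed.

Lemma centralizer_normal_trivial (m_gt0 : forall i, 0 < m i) n0 :
  N n0 -> n0 <> id -> c = id.
Proof.
move=> Nn0 n0ne; apply: NNPP => /nonid_moves [u0 cu0].
have [u [n [u0u Nn nu]]] := normal_moves_below m_gt0 u0 Nn0 n0ne.
exact: no_common_moved_vertex (aut_moved_below ac cu0 u0u) Nn nu.
Qed.

End Centralizer.

Section Retraction.
Variables (m : nat -> nat) (G N K : (V m -> V m) -> Prop).
Variable phi : (V m -> V m) -> V m -> V m.
Hypotheses (NN : is_normal N G) (SK : is_subgroup K) (KG : subset_of K G).
Hypotheses (NK : subset_of N K) (phiN : forall k, K k -> N (phi k)).
Hypothesis phiM : forall k1 k2, K k1 -> K k2 -> phi (k1 \o k2) = phi k1 \o phi k2.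
Hypothesis phi_id : forall n, N n -> phi n = n.

Let SN := normal_subgroup NN.

Lemma retraction_kernel_centralizes c :
  K c -> phi c = id -> forall n, N n -> c \o n = n \o c.
Proof.
move=> Kc phic n Nn; have Kn := NK Nn.
have [ci Kci [cK ciK]] := subgroup_inv SK Kc.
have [ni Nni [nK niK]] := subgroup_inv SN Nn.
have Kni := NK Nni.
have phici : phi ci = id.
  have cci : c \o ci = id by apply: functional_extensionality => w; apply: ciK.
  by rewrite -[RHS](phi_id (subgroup_id SN)) -cci phiM // phic.
have Nx : N (c \o n \o ci \o ni) :=
  subgroup_comp SN (normal_conj NN (KG Kc) Nn cK ciK) Nni.
have x_id : c \o n \o ci \o ni = id.
  have Kcn := subgroup_comp SK Kc Kn; have Kcnci := subgroup_comp SK Kcn Kci.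
  rewrite -(phi_id Nx) phiM // phiM // phiM // phic phici !phi_id //.
  by apply: functional_extensionality => w /=; apply: niK.
apply: functional_extensionality => w.
by have /= := congr1 (@^~ (n (c w))) x_id; rewrite nK cK.
Qed.

Lemma retraction_domain_sub :
  (forall c, G c -> (forall n, N n -> c \o n = n \o c) -> c = id) -> subset_of K N.
Proof.
move=> centralizer_trivial k Kk.
have [ai Nai [aK aiK]] := subgroup_inv SN (phiN Kk).
have Kai := NK Nai; have Kc := subgroup_comp SK Kai Kk.
have phic : phi (ai \o k) = id.
  by rewrite phiM // phi_id //; apply: functional_extensionality; apply: aK.
have c_id := centralizer_trivial _ (KG Kc) (retraction_kernel_centralizes Kc phic).
have -> : k = phi k \o (ai \o k) by apply: functional_extensionality => x /=; rewrite aiK.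
by rewrite c_id; apply: phiN.
Qed.

End Retraction.

Lemma finite_index_sub (m : nat -> nat) (G H K : (V m -> V m) -> Prop) :
  subset_of K H -> finite_index K G -> finite_index H G.
Proof.
move=> KH [reps cover]; exists reps => g /cover [r rr [k Kk ->]].
by exists r => //; exists k => //; apply: KH.
Qed.

Theorem lemma3p3 (m : nat -> nat) (Hm : forall n, 2 <= m n)
  (G N : (V m -> V m) -> Prop) :
  weakly_branch G -> is_normal N G -> (exists2 n, N n & n <> id) ->
  (virtual_retract N G <-> finite_index N G).
Proof.
move=> WB NN [n0 Nn0 n0ne]; have m_gt0 i : 0 < m i := ltnW (Hm i).
split=> [[K [SK [KG [FK [NK [phi [phiN [phiM phi_id]]]]]]]] | FN].
  apply: finite_index_sub FK; apply: (retraction_domain_sub NN SK KG NK phiN phiM phi_id).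
  by move=> c Gc cN; apply: (centralizer_normal_trivial WB NN Gc cN m_gt0 Nn0 n0ne).
exists N; split; first exact: normal_subgroup NN.
split; first exact: normal_sub NN.
by do 2!split=> //; exists id.
Qed.
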